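(* Let $M$ be a model of $PA^-$ of cardinality $\aleph_1$ which is Diophantine correct (i.e. $M$ satisfies every universal LA-sentence true in $\mathbb{N}$), and let $D$ be a regular filter on $\omega$. Then $M$ can be embedded (as an LA-structure) into the reduced power $\mathbb{N}^{\omega}/D$.
   Context: LA is the first-order language with non-logical symbols $+,\cdot,0,1,\leq$; $\mathbb{N}$ is the standard LA-structure. $PA^-$ is the theory of nonnegative parts of discretely ordered rings, axiomatized by: associativity and commutativity of $+$ and $\cdot$; distributivity $x\cdot(y+z)=x\cdot y+x\cdot z$; $x+0=x$, $x\cdot 0=0$, $x\cdot 1=x$; $\leq$ is a reflexive linear order with $<$ transitive and $x<y\vee x=y\vee y<x$ (where $x<y$ abbreviates $x\le y\wedge x\ne y$); $x<y\to x+z<y+z$; $0<z\wedge x<y\to x\cdot z<y\cdot z$; $x<y\to\exists z(x+z=y)$; $0<1$ and $x>0\to x\geq 1$; $x\geq 0$. A filter $D$ on $\omega$ is regular if there is a family $\{A_n\}_{n\in\omega}\subseteq D$ such that every element of $\omega$ belongs to only finitely many $A_n$. The reduced power $\mathbb{N}^\omega/D$ has as elements the classes of functions $f:\omega\to\mathbb{N}$ modulo $f\sim g$ iff $\{n: f(n)=g(n)\}\in D$, with $+,\cdot$ defined pointwise, $0,1$ the classes of constant functions, and $[f]\le[g]$ iff $\{n:f(n)\le g(n)\}\in D$. An embedding is an injective map preserving $0,1,+,\cdot$ and $\leq$. *)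

From Stdlib Require Import Arith.

Record LAstruct := {
  carrier :> Type;
  la_add : carrier -> carrier -> carrier;
  la_mul : carrier -> carrier -> carrier;
  la_zero : carrier;
  la_one : carrier;
  la_le : carrier -> carrier -> Prop
}.

Definition la_lt (M : LAstruct) (x y : M) : Prop := la_le M x y /\ x <> y.

Definition Nstd : LAstruct :=
  {| carrier := nat; la_add := Nat.add; la_mul := Nat.mul;
     la_zero := 0; la_one := 1; la_le := Nat.le |}.

Record PAminus (M : LAstruct) : Prop := {
  pa_add_assoc : forall x y z : M, la_add M (la_add M x y) z = la_add M x (la_add M y z);
  pa_add_comm : forall x y : M, la_add M x y = la_add M y x;
  pa_mul_assoc : forall x y z : M, la_mul M (la_mul M x y) z = la_mul M x (la_mul M y z);
  pa_mul_comm : forall x y : M, la_mul M x y = la_mul M y x;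
  pa_distr : forall x y z : M, la_mul M x (la_add M y z) = la_add M (la_mul M x y) (la_mul M x z);
  pa_add_0 : forall x : M, la_add M x (la_zero M) = x;
  pa_mul_0 : forall x : M, la_mul M x (la_zero M) = la_zero M;
  pa_mul_1 : forall x : M, la_mul M x (la_one M) = x;
  pa_le_refl : forall x : M, la_le M x x;
  pa_lt_trans : forall x y z : M, la_lt M x y -> la_lt M y z -> la_lt M x z;
  pa_trichotomy : forall x y : M, la_lt M x y \/ x = y \/ la_lt M y x;
  pa_lt_add : forall x y z : M, la_lt M x y -> la_lt M (la_add M x z) (la_add M y z);
  pa_lt_mul : forall x y z : M, la_lt M (la_zero M) z -> la_lt M x y ->
                la_lt M (la_mul M x z) (la_mul M y z);
  pa_lt_sub : forall x y : M, la_lt M x y -> exists z, la_add M x z = y;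
  pa_0_lt_1 : la_lt M (la_zero M) (la_one M);
  pa_discrete : forall x : M, la_lt M (la_zero M) x -> la_le M (la_one M) x;
  pa_nonneg : forall x : M, la_le M (la_zero M) x
}.

Inductive term :=
| Tvar : nat -> term
| Tzero : term
| Tone : term
| Tadd : term -> term -> term
| Tmul : term -> term -> term.

Inductive qf_formula :=
| Feq : term -> term -> qf_formula
| Fle : term -> term -> qf_formula
| Fnot : qf_formula -> qf_formula
| Fand : qf_formula -> qf_formula -> qf_formula
| For : qf_formula -> qf_formula -> qf_formula.

Fixpoint eval_term (M : LAstruct) (e : nat -> M) (t : term) : M :=
  match t with
  | Tvar i => e i
  | Tzero => la_zero M
  | Tone => la_one M
  | Tadd a b => la_add M (eval_term M e a) (eval_term M e b)
  | Tmul a b => la_mul M (eval_term M e a) (eval_term M e b)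
  end.

Fixpoint sat_qf (M : LAstruct) (e : nat -> M) (phi : qf_formula) : Prop :=
  match phi with
  | Feq a b => eval_term M e a = eval_term M e b
  | Fle a b => la_le M (eval_term M e a) (eval_term M e b)
  | Fnot p => ~ sat_qf M e p
  | Fand p q => sat_qf M e p /\ sat_qf M e q
  | For p q => sat_qf M e p \/ sat_qf M e q
  end.

(** A universal LA-sentence is the universal closure of a quantifier-free
    formula; it holds in M iff the matrix holds under every assignment. *)
Definition sat_universal_closure (M : LAstruct) (phi : qf_formula) : Prop :=
  forall e : nat -> M, sat_qf M e phi.

Definition diophantine_correct (M : LAstruct) : Prop :=
  forall phi : qf_formula,
    sat_universal_closure Nstd phi -> sat_universal_closure M phi.

Definition countable_set {T : Type} (A : T -> Prop) : Prop :=
  exists h : T -> nat, forall x y, A x -> A y -> h x = h y -> x = y.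

(** T has cardinality aleph_1: T is uncountable and carries a strict
    well-order of type omega_1 (every proper initial segment countable). *)
Definition card_aleph1 (T : Type) : Prop :=
  ~ countable_set (fun _ : T => True) /\
  exists R : T -> T -> Prop,
    well_founded R /\
    (forall x y z, R x y -> R y z -> R x z) /\
    (forall x y, R x y \/ x = y \/ R y x) /\
    (forall x, countable_set (fun y => R y x)).

Definition filter_on_omega (D : (nat -> Prop) -> Prop) : Prop :=
  D (fun _ => True) /\
  ~ D (fun _ => False) /\
  (forall A B, D A -> D B -> D (fun n => A n /\ B n)) /\
  (forall A B : nat -> Prop, D A -> (forall n, A n -> B n) -> D B).

Definition regular_filter (D : (nat -> Prop) -> Prop) : Prop :=
  filter_on_omega D /\
  exists A : nat -> (nat -> Prop),
    (forall n, D (A n)) /\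
    (forall k, exists N, forall n, A n k -> n < N).

(** * Embeddings into the reduced power N^omega / D.
    An element of N^omega/D is the class [g] of some g : nat -> nat; a map
    M -> N^omega/D is given by choosing a representative f x of each image. *)
Definition D_eq (D : (nat -> Prop) -> Prop) (g h : nat -> nat) : Prop :=
  D (fun n => g n = h n).

Definition D_le (D : (nat -> Prop) -> Prop) (g h : nat -> nat) : Prop :=
  D (fun n => g n <= h n).

Definition embeds_into_reduced_power (D : (nat -> Prop) -> Prop)
    (M : LAstruct) (f : M -> nat -> nat) : Prop :=
  (forall x y : M, D_eq D (f x) (f y) -> x = y) /\
  D_eq D (f (la_zero M)) (fun _ => 0) /\
  D_eq D (f (la_one M)) (fun _ => 1) /\
  (forall x y : M, D_eq D (f (la_add M x y)) (fun n => f x n + f y n)) /\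
  (forall x y : M, D_eq D (f (la_mul M x y)) (fun n => f x n * f y n)) /\
  (forall x y : M, la_le M x y <-> D_le D (f x) (f y)).

From Stdlib Require Import Arith Lia List Classical ClassicalEpsilon
  FunctionalExtensionality PropExtensionality Cantor.
Import ListNotations.

(* Say that g : M -> N^omega preserves existentials on dom ⊆ M if every
   existential formula with parameters from dom that holds in M holds in N,
   at the g-images of the parameters, in D-almost every coordinate.
   Diophantine correctness says precisely that every g preserves existentials
   on the empty set, and since formulas have finitely many parameters the
   property passes to unions of chains.  It also passes from a countable dom
   to dom ∪ {a}: there are countably many existential formulas over dom ∪ {a},
   every finite set of those true of a is D-almost everywhere satisfied by a
   single value, and regularity of D lets one diagonalise, choosing at
   coordinate k a value good for the finitely many formulas still alive at k.
   Building the map along an omega_1-ordering of M, whose initial segments are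
   countable, gives a map preserving existentials on all of M, which is an
   embedding because atomic formulas and their negations are existential. *)

Fixpoint rename_term (s : nat -> nat) (t : term) : term :=
  match t with
  | Tvar i => Tvar (s i)
  | Tzero => Tzero
  | Tone => Tone
  | Tadd a b => Tadd (rename_term s a) (rename_term s b)
  | Tmul a b => Tmul (rename_term s a) (rename_term s b)
  end.

Fixpoint rename (s : nat -> nat) (phi : qf_formula) : qf_formula :=
  match phi with
  | Feq a b => Feq (rename_term s a) (rename_term s b)
  | Fle a b => Fle (rename_term s a) (rename_term s b)
  | Fnot q => Fnot (rename s q)
  | Fand q r => Fand (rename s q) (rename s r)
  | For q r => For (rename s q) (rename s r)
  end.

Lemma eval_rename_term (X : LAstruct) (e : nat -> X) s t :
  eval_term X e (rename_term s t) = eval_term X (fun i => e (s i)) t.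
Proof. induction t; simpl; congruence. Qed.

Lemma sat_rename (X : LAstruct) (e : nat -> X) s phi :
  sat_qf X e (rename s phi) <-> sat_qf X (fun i => e (s i)) phi.
Proof. induction phi; simpl; rewrite ?eval_rename_term; tauto. Qed.

Fixpoint term_bound (t : term) : nat :=
  match t with
  | Tvar i => S i
  | Tzero | Tone => 0
  | Tadd a b | Tmul a b => max (term_bound a) (term_bound b)
  end.

Fixpoint bound (phi : qf_formula) : nat :=
  match phi with
  | Feq a b | Fle a b => max (term_bound a) (term_bound b)
  | Fnot q => bound q
  | Fand q r | For q r => max (bound q) (bound r)
  end.

Lemma eval_term_agree (X : LAstruct) (e e' : nat -> X) t :
  (forall i, i < term_bound t -> e i = e' i) -> eval_term X e t = eval_term X e' t.
Proof.
  induction t; simpl; intros H; try reflexivity.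
  - apply H; lia.
  - rewrite IHt1, IHt2; auto; intros; apply H; lia.
  - rewrite IHt1, IHt2; auto; intros; apply H; lia.
Qed.

Lemma sat_agree (X : LAstruct) (e e' : nat -> X) phi :
  (forall i, i < bound phi -> e i = e' i) -> (sat_qf X e phi <-> sat_qf X e' phi).
Proof.
  induction phi; simpl; intros H.
  - rewrite (eval_term_agree X e e' t), (eval_term_agree X e e' t0);
      [tauto | intros; apply H; lia ..].
  - rewrite (eval_term_agree X e e' t), (eval_term_agree X e e' t0);
      [tauto | intros; apply H; lia ..].
  - rewrite IHphi; tauto.
  - rewrite IHphi1, IHphi2; [tauto | intros; apply H; lia ..].
  - rewrite IHphi1, IHphi2; [tauto | intros; apply H; lia ..].
Qed.

Lemma sat_extend_agreement (X : LAstruct) phi (v : nat -> X) (P : nat -> Prop) :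
  (exists e, (forall i, P i -> i < bound phi -> e i = v i) /\ sat_qf X e phi) ->
  exists e, (forall i, P i -> e i = v i) /\ sat_qf X e phi.
Proof.
  intros [e [He Hs]].
  exists (fun i => if lt_dec i (bound phi) then e i else v i). split.
  - intros i Pi. destruct (lt_dec i (bound phi)); auto.
  - apply (sat_agree X e); [|exact Hs].
    intros i Hi. destruct (lt_dec i (bound phi)); [reflexivity | lia].
Qed.

Fixpoint big_and (phi : nat -> qf_formula) (j : nat) : qf_formula :=
  match j with
  | 0 => phi 0
  | S j' => Fand (big_and phi j') (phi (S j'))
  end.

Lemma sat_big_and (X : LAstruct) (e : nat -> X) phi j :
  sat_qf X e (big_and phi j) <-> forall r, r <= j -> sat_qf X e (phi r).
Proof.
  induction j as [|j IH]; simpl.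
  - split; [intros H r Hr; replace r with 0 by lia; exact H | intros H; apply H; lia].
  - rewrite IH. split.
    + intros [H1 H2] r Hr.
      destruct (Nat.eq_dec r (S j)) as [->|]; [exact H2 | apply H1; lia].
    + intros H; split; [intros r Hr |]; apply H; lia.
Qed.

Fixpoint term_code (t : term) : nat :=
  match t with
  | Tvar i => to_nat (0, i)
  | Tzero => to_nat (1, 0)
  | Tone => to_nat (2, 0)
  | Tadd a b => to_nat (3, to_nat (term_code a, term_code b))
  | Tmul a b => to_nat (4, to_nat (term_code a, term_code b))
  end.

Fixpoint formula_code (phi : qf_formula) : nat :=
  match phi with
  | Feq a b => to_nat (0, to_nat (term_code a, term_code b))
  | Fle a b => to_nat (1, to_nat (term_code a, term_code b))
  | Fnot q => to_nat (2, formula_code q)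
  | Fand q r => to_nat (3, to_nat (formula_code q, formula_code r))
  | For q r => to_nat (4, to_nat (formula_code q, formula_code r))
  end.

Lemma to_nat_inj a b c d : to_nat (a, b) = to_nat (c, d) -> a = c /\ b = d.
Proof.
  intros H. apply (f_equal of_nat) in H. rewrite !cancel_of_to in H.
  injection H; auto.
Qed.

Lemma term_code_inj t u : term_code t = term_code u -> t = u.
Proof.
  revert u; induction t; destruct u; cbn -[to_nat]; intros H;
    destruct (to_nat_inj _ _ _ _ H) as [Hc Hargs]; try discriminate Hc.
  - congruence.
  - reflexivity.
  - reflexivity.
  - destruct (to_nat_inj _ _ _ _ Hargs); f_equal; auto.
  - destruct (to_nat_inj _ _ _ _ Hargs); f_equal; auto.
Qed.

Lemma formula_code_inj phi psi : formula_code phi = formula_code psi -> phi = psi.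
Proof.
  revert psi; induction phi; destruct psi; cbn -[to_nat]; intros H;
    destruct (to_nat_inj _ _ _ _ H) as [Hc Hargs]; try discriminate Hc.
  - destruct (to_nat_inj _ _ _ _ Hargs); f_equal; auto using term_code_inj.
  - destruct (to_nat_inj _ _ _ _ Hargs); f_equal; auto using term_code_inj.
  - f_equal; auto.
  - destruct (to_nat_inj _ _ _ _ Hargs); f_equal; auto.
  - destruct (to_nat_inj _ _ _ _ Hargs); f_equal; auto.
Qed.

Lemma qf_formula_enumerable : exists form : nat -> qf_formula, forall phi, exists r, form r = phi.
Proof.
  exists (fun n => epsilon (inhabits (Feq Tzero Tzero)) (fun phi => formula_code phi = n)).
  intros phi. exists (formula_code phi). apply formula_code_inj.
  apply (epsilon_spec _ (fun psi => formula_code psi = formula_code phi)).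
  exists phi; reflexivity.
Qed.

(* Even variables [2 i] stand for the parameters [p i], odd ones for witnesses. *)
Definition interleave {X : Type} (p w : nat -> X) (n : nat) : X :=
  if Nat.even n then p (Nat.div2 n) else w (Nat.div2 n).

Lemma interleave_even {X : Type} (p w : nat -> X) i : interleave p w (2 * i) = p i.
Proof. unfold interleave. rewrite Nat.even_mul, Nat.div2_double. reflexivity. Qed.

Lemma interleave_odd {X : Type} (p w : nat -> X) i : interleave p w (2 * i + 1) = w i.
Proof.
  unfold interleave.
  rewrite Nat.even_add, Nat.even_mul, Nat.add_1_r, Nat.div2_succ_double. reflexivity.
Qed.

Lemma countable_enumeration {T : Type} (dom : T -> Prop) (a : T) :
  countable_set dom ->
  exists p : nat -> T, p 0 = a /\ (forall i, dom (p i) \/ p i = a) /\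
    (forall x, dom x -> exists i, p i = x).
Proof.
  intros [c Hc].
  pose (pick m := epsilon (inhabits a)
                    (fun b => (dom b \/ b = a) /\ forall x, dom x -> c x = m -> b = x)).
  assert (Hpick : forall m, (dom (pick m) \/ pick m = a) /\
                            forall x, dom x -> c x = m -> pick m = x).
  { intros m. apply (epsilon_spec (inhabits a)).
    destruct (classic (exists x, dom x /\ c x = m)) as [[x [Hx Hcx]] | Hnone].
    - exists x. split; [left; exact Hx |].
      intros y Hy Hcy. apply Hc; congruence.
    - exists a. split; [right; reflexivity |].
      intros y Hy Hcy. exfalso; eauto. }
  exists (fun i => match i with 0 => a | S m => pick m end).
  split; [reflexivity | split].
  - intros [|m]; [right; reflexivity | apply Hpick].
  - intros x Hx. exists (S (c x)). apply Hpick; auto.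
Qed.

Lemma bounded_has_max (Q : nat -> Prop) N :
  (forall j, Q j -> j < N) -> (exists j, Q j) -> exists m, Q m /\ forall j, Q j -> j <= m.
Proof.
  revert Q; induction N as [|N IH]; intros Q Hb Hex.
  - destruct Hex as [j Hj]; specialize (Hb j Hj); lia.
  - destruct (classic (Q N)) as [HN | HN].
    + exists N; split; [exact HN |]. intros j Hj; specialize (Hb j Hj); lia.
    + apply IH; [| exact Hex]. intros j Hj. specialize (Hb j Hj).
      destruct (Nat.eq_dec j N); [subst; contradiction | lia].
Qed.

Lemma finite_upper_bound {X : Type} (R : X -> X -> Prop) (T : X -> Prop) :
  (forall x y z, R x y -> R y z -> R x z) -> (forall x y, R x y \/ x = y \/ R y x) ->
  forall (e : nat -> X) (P : nat -> Prop) n,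
    (forall i, P i -> T (e i)) -> (forall i, P i -> i < n) ->
    (forall i, ~ P i) \/ exists c, T c /\ forall i, P i -> R (e i) c \/ e i = c.
Proof.
  intros Htrans Htot e P n HT Hn.
  enough (H : forall m, (forall i, P i -> i < m -> False) \/
                exists c, T c /\ forall i, P i -> i < m -> R (e i) c \/ e i = c).
  { destruct (H n) as [Hnone | [c [Tc Hc]]]; [left | right; exists c]; eauto. }
  induction m as [|m [Hnone | [c [Tc Hc]]]].
  - left; intros; lia.
  - destruct (classic (P m)) as [Pm | nPm].
    + right. exists (e m). split; [auto |]. intros i Pi Hi.
      destruct (Nat.eq_dec i m) as [-> | Him]; [right; reflexivity |].
      exfalso; apply (Hnone i Pi); lia.
    + left. intros i Pi Hi.
      destruct (Nat.eq_dec i m) as [-> | Him]; [contradiction | apply (Hnone i Pi); lia].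
  - destruct (classic (P m)) as [Pm | nPm].
    2: { right. exists c. split; [exact Tc |]. intros i Pi Hi.
         destruct (Nat.eq_dec i m) as [-> | Him]; [contradiction | apply Hc; auto; lia]. }
    destruct (Htot (e m) c) as [Hmc | [Hmc | Hcm]].
    1, 2: right; exists c; split; [exact Tc |]; intros i Pi Hi;
          destruct (Nat.eq_dec i m) as [-> | Him]; [auto | apply Hc; auto; lia].
    right. exists (e m). split; [auto |]. intros i Pi Hi.
    destruct (Nat.eq_dec i m) as [-> | Him]; [right; reflexivity |].
    left. destruct (Hc i Pi) as [Hic | ->]; [lia | eauto | exact Hcm].
Qed.

Lemma wf_fixpoint {X Y : Type} (R : X -> X -> Prop) (y0 : Y) :
  well_founded R -> forall step : X -> (X -> Y) -> Y,
  (forall x g g', (forall z, R z x -> g z = g' z) -> step x g = step x g') ->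
  exists f : X -> Y, forall x, f x = step x f.
Proof.
  intros Hwf step Hlocal.
  pose (restrict x (G : forall z, R z x -> Y) z :=
          match excluded_middle_informative (R z x) with left H => G z H | right _ => y0 end).
  exists (Fix Hwf (fun _ => Y) (fun x G => step x (restrict x G))). intros x.
  rewrite Fix_eq.
  - apply Hlocal. intros z Hz. unfold restrict.
    destruct (excluded_middle_informative (R z x)); [reflexivity | contradiction].
  - intros x' G G' HG. f_equal. apply functional_extensionality. intros z.
    unfold restrict. destruct (excluded_middle_informative (R z x')); auto.
Qed.

Section Filters.

Variable D : (nat -> Prop) -> Prop.
Hypothesis HD : filter_on_omega D.

Lemma filter_mono (A B : nat -> Prop) : D A -> (forall n, A n -> B n) -> D B.
Proof. destruct HD as (_ & _ & _ & Hmono). apply Hmono. Qed.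

Lemma filter_and (A B : nat -> Prop) : D A -> D B -> D (fun n => A n /\ B n).
Proof. destruct HD as (_ & _ & Hand & _). apply Hand. Qed.

Lemma filter_all (A : nat -> Prop) : (forall n, A n) -> D A.
Proof. intros H. apply (filter_mono (fun _ => True)); [apply HD | auto]. Qed.

Lemma filter_nonempty (A : nat -> Prop) : D A -> exists n, A n.
Proof.
  intros HA. apply NNPP. intros Hnone. apply (proj1 (proj2 HD)).
  apply (filter_mono A); [exact HA |]. intros n An; apply Hnone; eauto.
Qed.

Lemma filter_big_and (A : nat -> nat -> Prop) j :
  (forall i, D (A i)) -> D (fun k => forall i, i <= j -> A i k).
Proof.
  intros HA. induction j as [|j IH].
  - apply (filter_mono (A 0)); [apply HA |]. intros k Hk i Hi. replace i with 0 by lia; exact Hk.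
  - apply (filter_mono _ _ (filter_and _ _ IH (HA (S j)))). intros k [Hk Hk'] i Hi.
    destruct (Nat.eq_dec i (S j)) as [-> |]; [exact Hk' | apply Hk; lia].
Qed.

End Filters.

Lemma regular_filter_diagonal (D : (nat -> Prop) -> Prop) (Q : nat -> nat -> nat -> Prop) :
  regular_filter D ->
  (forall j, D (fun k => exists y, forall r, r <= j -> Q r k y)) ->
  exists h : nat -> nat, forall r, D (fun k => Q r k (h k)).
Proof.
  intros [HD [A [HA Hfin]]] Hj.
  pose (alive k j := (forall i, i <= j -> A i k) /\ exists y, forall r, r <= j -> Q r k y).
  assert (Halive : forall j, D (fun k => alive k j)).
  { intros j. apply filter_and; [exact HD | apply filter_big_and; auto | apply Hj]. }
  (* By regularity only finitely many j are alive at k, so the last one decides. *)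
  assert (Hy : forall k, exists y, forall j, alive k j -> forall r, r <= j -> Q r k y).
  { intros k. destruct (classic (exists j, alive k j)) as [Hex | Hnone].
    - destruct (Hfin k) as [N HN].
      destruct (bounded_has_max (alive k) N) as (m & [_ [y Hy]] & Hmax); [| exact Hex |].
      + intros j [Hall _]. apply HN, Hall. lia.
      + exists y. intros j Hjk r Hr. apply Hy. specialize (Hmax j Hjk). lia.
    - exists 0. intros j Hjk. exfalso; eauto. }
  exists (fun k => epsilon (inhabits 0)
                     (fun y => forall j, alive k j -> forall r, r <= j -> Q r k y)).
  intros r. apply (filter_mono D HD _ _ (Halive r)). intros k Hk.
  exact (epsilon_spec (inhabits 0) _ (Hy k) r Hk r (le_n r)).
Qed.

Definition update {M : LAstruct} (g : M -> nat -> nat) (a : M) (h : nat -> nat) (x : M) :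
  nat -> nat :=
  if excluded_middle_informative (x = a) then h else g x.

Section ExistentialPreservation.

Variables (M : LAstruct) (D : (nat -> Prop) -> Prop).
Hypothesis HD : filter_on_omega D.

(* The variables outside [P] are read as existentially quantified. *)
Definition ex_preserving (dom : M -> Prop) (g : M -> nat -> nat) : Prop :=
  forall (phi : qf_formula) (e : nat -> M) (P : nat -> Prop),
    (forall i, P i -> dom (e i)) -> sat_qf M e phi ->
    D (fun k => exists e' : nat -> nat,
                  (forall i, P i -> e' i = g (e i) k) /\ sat_qf Nstd e' phi).

Lemma ex_preserving_ext dom g g' :
  (forall x, dom x -> g x = g' x) -> ex_preserving dom g -> ex_preserving dom g'.
Proof.
  intros Hgg' Hg phi e P HP Hs. apply (filter_mono D HD _ _ (Hg phi e P HP Hs)).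
  intros k [e' [He' Hs']]. exists e'. split; [| exact Hs'].
  intros i Pi. rewrite <- Hgg'; auto.
Qed.

Lemma ex_preserving_empty g : diophantine_correct M -> ex_preserving (fun _ => False) g.
Proof.
  intros Hdc phi e P HP Hs. apply (filter_all D HD). intros k.
  destruct (classic (exists e' : nat -> nat, sat_qf Nstd e' phi)) as [[e' He'] | Hnone].
  - exists e'. split; [intros i Pi; destruct (HP i Pi) | exact He'].
  - exfalso. apply (Hdc (Fnot phi)) with e; [| exact Hs].
    intros e' He'. apply Hnone; eauto.
Qed.

Lemma ex_preserving_chain (R : M -> M -> Prop) (T : M -> Prop) g :
  diophantine_correct M ->
  (forall x y z, R x y -> R y z -> R x z) -> (forall x y, R x y \/ x = y \/ R y x) ->
  (forall c, T c -> ex_preserving (fun x => R x c \/ x = c) g) -> ex_preserving T g.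
Proof.
  intros Hdc Htrans Htot Hseg phi e P HP Hs.
  pose (P' i := P i /\ i < bound phi).
  assert (H : D (fun k => exists e', (forall i, P' i -> e' i = g (e i) k) /\
                                     sat_qf Nstd e' phi)).
  { destruct (finite_upper_bound R T Htrans Htot e P' (bound phi)) as [Hnone | [c [Tc Hc]]].
    - intros i [Pi _]; auto.
    - intros i [_ Hi]; exact Hi.
    - apply (ex_preserving_empty g Hdc phi e P'); [exact Hnone | exact Hs].
    - exact (Hseg c Tc phi e P' Hc Hs). }
  apply (filter_mono D HD _ _ H). intros k [e' [He' Hs']].
  apply (sat_extend_agreement Nstd phi (fun i => g (e i) k)).
  exists e'. split; [| exact Hs'].
  intros i Pi Hi. apply He'. split; assumption.
Qed.

Lemma ex_preserving_transfer f :
  ex_preserving (fun _ => True) f ->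
  forall phi e, sat_qf M e phi -> D (fun k => sat_qf Nstd (fun i => f (e i) k) phi).
Proof.
  intros Hf phi e Hs.
  apply (filter_mono D HD _ _ (Hf phi e (fun _ => True) (fun _ _ => I) Hs)).
  intros k [e' [He' Hs']].
  replace (fun i => f (e i) k) with e'; [exact Hs' |].
  apply functional_extensionality. intros i. exact (He' i I).
Qed.

Lemma ex_preserving_embeds f :
  ex_preserving (fun _ => True) f -> embeds_into_reduced_power D M f.
Proof.
  intros Hf. pose proof (ex_preserving_transfer f Hf) as Ht.
  split; [| split; [| split; [| split; [| split]]]].
  - intros x y Hxy. apply NNPP. intros Hne.
    pose proof (Ht (Fnot (Feq (Tvar 0) (Tvar 1))) (fun i => nth i [x; y] x) Hne) as Hdiff.
    destruct (filter_nonempty D HD _ (filter_and D HD _ _ Hxy Hdiff)) as [k [Heq Hneq]].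
    exact (Hneq Heq).
  - exact (Ht (Feq (Tvar 0) Tzero) (fun _ => la_zero M) eq_refl).
  - exact (Ht (Feq (Tvar 0) Tone) (fun _ => la_one M) eq_refl).
  - intros x y.
    exact (Ht (Feq (Tvar 0) (Tadd (Tvar 1) (Tvar 2)))
              (fun i => nth i [la_add M x y; x; y] x) eq_refl).
  - intros x y.
    exact (Ht (Feq (Tvar 0) (Tmul (Tvar 1) (Tvar 2)))
              (fun i => nth i [la_mul M x y; x; y] x) eq_refl).
  - intros x y. split.
    + intros Hle. exact (Ht (Fle (Tvar 0) (Tvar 1)) (fun i => nth i [x; y] x) Hle).
    + intros Hle. apply NNPP. intros Hnle.
      pose proof (Ht (Fnot (Fle (Tvar 0) (Tvar 1))) (fun i => nth i [x; y] x) Hnle) as Hgt.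
      destruct (filter_nonempty D HD _ (filter_and D HD _ _ Hle Hgt)) as [k [H1 H2]].
      exact (H2 H1).
Qed.

End ExistentialPreservation.

Section OnePointExtension.

Variables (M : LAstruct) (D : (nat -> Prop) -> Prop).
Hypothesis HD : regular_filter D.
Variables (dom : M -> Prop) (g : M -> nat -> nat) (a : M).
Hypothesis g_pres : ex_preserving M D dom g.
Variable p : nat -> M.
Hypothesis p_0 : p 0 = a.
Hypothesis p_range : forall i, dom (p i) \/ p i = a.
Hypothesis p_onto : forall x, dom x -> exists i, p i = x.
Variable form : nat -> qf_formula.
Hypothesis form_onto : forall phi, exists r, form r = phi.

Let holds_in_M (r : nat) : Prop := exists w, sat_qf M (interleave p w) (form r).

Let image_params (k y : nat) (i : nat) : nat := update g a (fun _ => y) (p i) k.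

Let realized (r k y : nat) : Prop :=
  holds_in_M r -> exists w', sat_qf Nstd (interleave (image_params k y) w') (form r).

Let witness (r : nat) : nat -> M :=
  epsilon (inhabits (fun _ => a)) (fun w => sat_qf M (interleave p w) (form r)).

(* The witnesses of the r-th formula go to the odd variables [2 <r, i> + 1], so
   that distinct formulas get disjoint witnesses; the parameters equal to [a]
   all go to variable 0, which carries the value sought for [a]. *)
Let separate (r : nat) : nat -> nat :=
  interleave (fun i => if excluded_middle_informative (p i = a) then 0 else 2 * i)
             (fun i => 2 * to_nat (r, i) + 1).

Let joint_env : nat -> M :=
  interleave p (fun m => witness (fst (of_nat m)) (snd (of_nat m))).

Let item (r : nat) : qf_formula :=
  if excluded_middle_informative (holds_in_M r) then rename (separate r) (form r)
  else Feq Tzero Tzero.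

Lemma joint_env_separate r : (fun n => joint_env (separate r n)) = interleave p (witness r).
Proof.
  apply functional_extensionality. intros n.
  destruct (Nat.Even_or_Odd n) as [[i ->] | [i ->]];
    unfold separate; rewrite ?interleave_even, ?interleave_odd.
  - destruct (excluded_middle_informative (p i = a)) as [Hi | Hi].
    + rewrite Hi, <- p_0. exact (interleave_even p _ 0).
    + apply interleave_even.
  - unfold joint_env. rewrite interleave_odd, cancel_of_to. reflexivity.
Qed.

Lemma sat_joint_env j : sat_qf M joint_env (big_and item j).
Proof.
  apply sat_big_and. intros r _. unfold item.
  destruct (excluded_middle_informative (holds_in_M r)) as [Hr |]; [| reflexivity].
  apply sat_rename. rewrite joint_env_separate. exact (epsilon_spec _ _ Hr).
Qed.

Lemma realized_finitely j : D (fun k => exists y, forall r, r <= j -> realized r k y).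
Proof.
  pose (P n := exists i, n = 2 * i /\ p i <> a).
  assert (HP : forall n, P n -> dom (joint_env n)).
  { intros n [i [-> Hi]]. unfold joint_env. rewrite interleave_even.
    destruct (p_range i); [assumption | contradiction]. }
  apply (filter_mono D (proj1 HD) _ _ (g_pres (big_and item j) joint_env P HP (sat_joint_env j))).
  intros k [e' [He' Hs]]. exists (e' 0). intros r Hr Hholds.
  exists (fun i => e' (2 * to_nat (r, i) + 1)).
  rewrite sat_big_and in Hs. specialize (Hs r Hr). unfold item in Hs.
  destruct (excluded_middle_informative (holds_in_M r)); [| contradiction].
  rewrite sat_rename in Hs.
  replace (interleave _ _) with (fun n => e' (separate r n)); [exact Hs |].
  apply functional_extensionality. intros n.
  destruct (Nat.Even_or_Odd n) as [[i ->] | [i ->]];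
    unfold separate; rewrite ?interleave_even, ?interleave_odd; [| reflexivity].
  unfold image_params, update.
  destruct (excluded_middle_informative (p i = a)) as [| Hi]; [reflexivity |].
  rewrite He' by (exists i; auto). unfold joint_env. rewrite interleave_even. reflexivity.
Qed.

Lemma ex_preserving_extend_enum :
  exists h, ex_preserving M D (fun x => dom x \/ x = a) (update g a h).
Proof.
  destruct (regular_filter_diagonal D realized HD realized_finitely) as [h Hh].
  exists h. intros phi e P HP Hs.
  pose (index x := epsilon (inhabits 0) (fun i => p i = x)).
  assert (Hindex : forall x, dom x \/ x = a -> p (index x) = x).
  { intros x Hx. apply (epsilon_spec (inhabits 0) (fun i => p i = x)).
    destruct Hx as [Hx | ->]; [exact (p_onto x Hx) | exists 0; exact p_0]. }
  pose (tau i := if excluded_middle_informative (P i) then 2 * index (e i) else 2 * i + 1).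
  assert (Htau : forall (X : Type) (q w : nat -> X),
             (fun i => interleave q w (tau i)) =
             fun i => if excluded_middle_informative (P i) then q (index (e i)) else w i).
  { intros X q w. apply functional_extensionality. intros i. unfold tau.
    destruct (excluded_middle_informative (P i));
      [apply interleave_even | apply interleave_odd]. }
  destruct (form_onto (rename tau phi)) as [r Hr].
  assert (Hholds : holds_in_M r).
  { exists e. rewrite Hr, sat_rename, Htau.
    replace (fun i => _) with e; [exact Hs |].
    apply functional_extensionality. intros i.
    destruct (excluded_middle_informative (P i)) as [Pi |]; [| reflexivity].
    symmetry. apply Hindex, HP, Pi. }
  apply (filter_mono D (proj1 HD) _ _ (Hh r)). intros k Hk.
  destruct (Hk Hholds) as [w' Hw']. rewrite Hr, sat_rename, Htau in Hw'.
  eexists. split; [| exact Hw'].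
  intros i Pi. cbv beta. destruct (excluded_middle_informative (P i)); [| contradiction].
  unfold image_params. rewrite Hindex by (apply HP, Pi).
  unfold update. destruct (excluded_middle_informative (e i = a)); reflexivity.
Qed.

End OnePointExtension.

Lemma ex_preserving_extend (M : LAstruct) D (dom : M -> Prop) g (a : M) :
  regular_filter D -> countable_set dom -> ex_preserving M D dom g ->
  exists h, ex_preserving M D (fun x => dom x \/ x = a) (update g a h).
Proof.
  intros HD Hdom Hg.
  destruct (countable_enumeration dom a Hdom) as (p & p_0 & p_range & p_onto).
  destruct qf_formula_enumerable as [form form_onto].
  exact (ex_preserving_extend_enum M D HD dom g a Hg p p_0 p_range p_onto form form_onto).
Qed.

Lemma ex_preserving_along_well_order (M : LAstruct) D (R : M -> M -> Prop) :
  regular_filter D -> diophantine_correct M -> well_founded R ->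
  (forall x y z, R x y -> R y z -> R x z) -> (forall x y, R x y \/ x = y \/ R y x) ->
  (forall x, countable_set (fun y => R y x)) ->
  exists f, ex_preserving M D (fun _ => True) f.
Proof.
  intros HD Hdc Hwf Htrans Htot Hsegs.
  pose (step al g := epsilon (inhabits (fun _ : nat => 0))
                       (fun h => ex_preserving M D (fun x => R x al \/ x = al) (update g al h))).
  destruct (wf_fixpoint R (fun _ : nat => 0) Hwf step) as [f Hf].
  { intros al g g' Hgg'. unfold step. f_equal.
    apply functional_extensionality. intros h. apply propositional_extensionality.
    assert (Hupd : forall x, R x al \/ x = al -> update g al h x = update g' al h x).
    { intros x Hx. unfold update.
      destruct (excluded_middle_informative (x = al)); [reflexivity |].
      destruct Hx; [auto | contradiction]. }
    split; apply (ex_preserving_ext M D (proj1 HD)); intros x Hx; [| symmetry]; auto. }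
  assert (Hseg : forall al, ex_preserving M D (fun x => R x al \/ x = al) f).
  { intros al. induction al as [al IH] using (well_founded_ind Hwf).
    assert (Hbelow : ex_preserving M D (fun x => R x al) f)
      by (apply (ex_preserving_chain M D (proj1 HD) R); auto).
    destruct (ex_preserving_extend M D _ f al HD (Hsegs al) Hbelow) as [h Hh].
    assert (Hstep : ex_preserving M D (fun x => R x al \/ x = al) (update f al (f al))).
    { rewrite (Hf al). unfold step. apply epsilon_spec. exists h; exact Hh. }
    apply (ex_preserving_ext M D (proj1 HD) _ (update f al (f al))); [| exact Hstep].
    intros x _. unfold update.
    destruct (excluded_middle_informative (x = al)) as [-> |]; reflexivity. }
  exists f. apply (ex_preserving_chain M D (proj1 HD) R); auto.
Qed.

Theorem theorem3 :
  forall (M : LAstruct),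
    PAminus M -> card_aleph1 M -> diophantine_correct M ->
    forall D : (nat -> Prop) -> Prop, regular_filter D ->
    exists f : M -> nat -> nat, embeds_into_reduced_power D M f.
Proof.
  intros M _ [_ (R & Hwf & Htrans & Htot & Hsegs)] Hdc D HD.
  destruct (ex_preserving_along_well_order M D R HD Hdc Hwf Htrans Htot Hsegs) as [f Hf].
  exists f. exact (ex_preserving_embeds M D (proj1 HD) f Hf).
Qed.
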